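(* In the meta-algorithm described in the context (with an arbitrary commitment subroutine), every corrupted search step $q$ whose current node $I^q$ is not a leaf satisfies $\Phi_{q+1}\le\Phi_q+1$.
   Context: Robust dynamic pricing: there are $T$ rounds and an unknown valuation $v^\star\in[0,1)$. At each round $t$ the seller posts $p_t\in[0,1]$; the true sale indicator is $y_t=\mathbbm 1\{p_t\le v^\star\}$, the seller observes $\sigma_t\in\{0,1\}$, and round $t$ is corrupted if $\sigma_t\neq y_t$. Meta-algorithm: let $D=\lceil\log_2 T\rceil$. Consider the complete binary tree of intervals of depth $D$ with root $[0,1)$, where each non-leaf node $[L,R)$ has children $[L,M)$ and $[M,R)$, $M=(L+R)/2$; the depth-$D$ nodes are the leaves, and $\ell^\star$ is the unique leaf containing $v^\star$. The algorithm keeps a current node $I$, initially the root. If $I=[L,R)$ is not a leaf, it performs a safety check — post $L$ and observe $\sigma_L$, post $R$ and observe $\sigma_R$; the check fails if $\sigma_L=0$ or $\sigma_R=1$ (by convention the query at $L=0$ and the query at $R=1$ always count as passing). On failure $I$ becomes its parent; otherwise it posts $M$, observes $\sigma_M$, and $I$ becomes $[M,R)$ if $\sigma_M=1$ and $[L,M)$ if $\sigma_M=0$. If $I$ is a leaf, a commitment subroutine is run on $I$; it posts prices on consecutive rounds and may return FAIL, in which case $I$ becomes its parent. Search steps: each iteration at a non-leaf node (safety check plus possible midpoint query) is one search step; each call of the commitment subroutine at a leaf is one search step. A search step is honest if none of its rounds is corrupted, and corrupted otherwise. $I^q$ is the current node at the start of search step $q$, and $\Phi_q=\mathrm{dist}(I^q,\ell^\star)$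 is the length of the shortest path between $I^q$ and $\ell^\star$ in the tree. *)

From HB Require Import structures.
From mathcomp Require Import all_boot all_order all_algebra.
From mathcomp Require Import reals.
Set Implicit Arguments. Unset Strict Implicit. Unset Printing Implicit Defensive.
Import Order.TTheory GRing.Theory Num.Theory.

(* A node is a pair (d, k) with d <= D and k < 2^d; it stands for the interval
   [k / 2^d, (k+1) / 2^d).  The root is (0,0) = [0,1); the children of (d,k)
   are (d+1, 2k) = [L,M) and (d+1, 2k+1) = [M,R); the parent is (d-1, k/2).
   Leaves are the nodes of depth D. *)

Definition valid (D : nat) (a : nat * nat) : bool := (a.1 <= D) && (a.2 < 2 ^ a.1).

Definition node (D : nat) := {a : nat * nat | valid D a}.

Definition depth D (a : node D) : nat := (val a).1.
Definition idx D (a : node D) : nat := (val a).2.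
Definition is_leaf D (a : node D) : bool := depth a == D.

Definition nbrs (D : nat) (a : nat * nat) : seq (nat * nat) :=
  (if a.1 is d.+1 then [:: (d, a.2 %/ 2)] else [::]) ++
  (if a.1 < D then [:: (a.1.+1, a.2.*2); (a.1.+1, a.2.*2.+1)] else [::]).

Fixpoint walkn (D n : nat) (a b : nat * nat) : bool :=
  if n is n'.+1 then has (fun c => walkn D n' c b) (nbrs D a) else a == b.

Lemma walkn_cat D m n a c b :
  walkn D m a c -> walkn D n c b -> walkn D (m + n) a b.
Proof.
elim: m a => [|m IH] a /=; first by move/eqP->.
move=> /hasP [x xin wx] wcb; apply/hasP; exists x => //; exact: IH.
Qed.

Lemma walkn_up D a : valid D a -> walkn D a.1 a (0, 0).
Proof.
case: a => d k; elim: d k => [|d IH] k /= /andP [hd hk].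
  by move: hk => /=; rewrite expn0 ltnS leqn0 => /eqP->.
have hv : valid D (d, k %/ 2).
  by rewrite /valid /= ltn_divLR // -expnSr hk andbT ltnW.
rewrite /nbrs /=; apply/orP; left; exact: (IH _ hv).
Qed.

Lemma walkn_down D a : valid D a -> walkn D a.1 (0, 0) a.
Proof.
case: a => d k; elim: d k => [|d IH] k /= /andP [hd hk].
  by move: hk => /=; rewrite expn0 ltnS leqn0 => /eqP->.
have hv : valid D (d, k %/ 2).
  by rewrite /valid /= ltn_divLR // -expnSr hk andbT ltnW.
suff h1 : walkn D 1 (d, k %/ 2) (d.+1, k).
  by have := walkn_cat (IH _ hv) h1; rewrite addn1.
rewrite /=.
rewrite /nbrs /= hd /= has_cat; apply/orP; right => /=.
rewrite !xpair_eqE eqxx /= -!muln2 orbF.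
have := divn_eq k 2; have := ltn_pmod k (isT : 0 < 2).
by case: (k %% 2) => [|[|//]] _; rewrite ?addn0 ?addn1 => <-; rewrite eqxx ?orbT.
Qed.

Lemma walk_exists D (a b : nat * nat) :
  valid D a -> valid D b -> exists n, walkn D n a b.
Proof.
move=> va vb; exists (a.1 + b.1); exact: walkn_cat (walkn_up va) (walkn_down vb).
Qed.

Definition tree_dist D (a b : node D) : nat :=
  ex_minn (walk_exists (valP a) (valP b)).

(* [insubd a p] is the node p if p is a valid node, and a otherwise; it is only
   used where p is valid (parent of a non-root node, children of a non-leaf). *)
Definition parent D (a : node D) : node D :=
  insubd a ((depth a).-1, idx a %/ 2).
Definition left_child D (a : node D) : node D :=
  insubd a ((depth a).+1, (idx a).*2).
Definition right_child D (a : node D) : node D :=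
  insubd a ((depth a).+1, (idx a).*2.+1).

Local Open Scope ring_scope.

Definition nodeL (R : realType) D (a : node D) : R :=
  (idx a)%:R / (2 ^ depth a)%:R.
Definition nodeR (R : realType) D (a : node D) : R :=
  (idx a).+1%:R / (2 ^ depth a)%:R.
Definition nodeM (R : realType) D (a : node D) : R :=
  (nodeL R a + nodeR R a) / 2.

Definition sale (R : realType) (vstar p : R) : bool := p <= vstar.

Definition contains (R : realType) D (a : node D) (v : R) : Prop :=
  nodeL R a <= v < nodeR R a.

(* sL, sR : observations for the queries at L and R (safety check);
   sM : observation for the midpoint query (only posted if the check passes). *)
Definition passL (R : realType) D (a : node D) (sL : bool) : bool :=
  (nodeL R a == 0) || sL.
Definition passR (R : realType) D (a : node D) (sR : bool) : bool :=
  (nodeR R a == 1) || ~~ sR.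
Definition check_passes (R : realType) D (a : node D) (sL sR : bool) : bool :=
  passL R a sL && passR R a sR.

Definition next_node (R : realType) D (a : node D) (sL sR sM : bool) : node D :=
  if check_passes R a sL sR then (if sM then right_child a else left_child a)
  else parent a.

Definition step_corrupted (R : realType) (vstar : R) D (a : node D)
    (sL sR sM : bool) : bool :=
  [|| sL != sale vstar (nodeL R a),
      sR != sale vstar (nodeR R a)
    | check_passes R a sL sR && (sM != sale vstar (nodeM R a))].

(* A search step at a non-leaf node moves the current node to one of its tree
   neighbours: a child after a passed check, the parent after a failed one (the
   root, having no parent, stays put).  Hence by the triangle inequality for
   the path metric the potential grows by at most one.  This holds for every
   step. *)

From HB Require Import structures.
From mathcomp Require Import all_boot all_order all_algebra.
From mathcomp Require Import reals.
Import Order.TTheory GRing.Theory Num.Theory.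

Set Implicit Arguments.
Unset Strict Implicit.
Unset Printing Implicit Defensive.

Lemma tree_dist_le_walk D (a b : node D) n :
  walkn D n (val a) (val b) -> tree_dist a b <= n.
Proof. by rewrite /tree_dist; case: ex_minnP => m _; apply. Qed.

Lemma walk_tree_dist D (a b : node D) : walkn D (tree_dist a b) (val a) (val b).
Proof. by rewrite /tree_dist; case: ex_minnP. Qed.

Lemma tree_dist_adj D (a b c : node D) :
  walkn D 1 (val b) (val a) -> tree_dist b c <= tree_dist a c + 1.
Proof.
move=> ba; apply: tree_dist_le_walk; rewrite addnC.
exact: walkn_cat ba (walk_tree_dist a c).
Qed.

Lemma walk1_up D d k : walkn D 1 (d.+1, k) (d, k %/ 2).
Proof. by rewrite /= /nbrs /= eqxx. Qed.

Lemma walk1_down D d k : d < D -> walkn D 1 (d, k %/ 2) (d.+1, k).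
Proof.
move=> ltdD; rewrite /= /nbrs /= ltdD has_cat; apply/orP; right.
rewrite /= !xpair_eqE !eqxx orbF /= -!muln2 {2 4}(divn_eq k 2).
by case: (k %% 2) (ltn_pmod k (isT : 0 < 2)) => [|[]] // _;
  rewrite ?addn0 ?addn1 eqxx ?orbT.
Qed.

Section Neighbours.

Variables (D : nat) (a : node D).

Let depth_le : depth a <= D.
Proof. by case/andP: (valP a). Qed.

Let idx_lt : idx a < 2 ^ depth a.
Proof. by case/andP: (valP a). Qed.

Let val_pair : val a = (depth a, idx a).
Proof. exact: surjective_pairing. Qed.

Lemma left_child_adj : ~~ is_leaf a -> walkn D 1 (val (left_child a)) (val a).
Proof.
move=> nleaf; have ltdD : depth a < D by rewrite ltn_neqAle nleaf depth_le.
rewrite /left_child insubdK; last first.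
  by rewrite unfold_in /= ltdD expnS mul2n ltn_double idx_lt.
by have := @walk1_up D (depth a) (idx a).*2; rewrite divn2 doubleK val_pair.
Qed.

Lemma right_child_adj : ~~ is_leaf a -> walkn D 1 (val (right_child a)) (val a).
Proof.
move=> nleaf; have ltdD : depth a < D by rewrite ltn_neqAle nleaf depth_le.
rewrite /right_child insubdK; last first.
  by rewrite unfold_in /= ltdD expnS mul2n ltn_Sdouble idx_lt.
have := @walk1_up D (depth a) (idx a).*2.+1.
by rewrite divn2 /= uphalf_double val_pair.
Qed.

Lemma parent_adj : 0 < depth a -> walkn D 1 (val (parent a)) (val a).
Proof.
move=> dpos; have ltdD : (depth a).-1 < D by rewrite prednK.
rewrite /parent insubdK; last first.
  by rewrite unfold_in /= ltn_divLR // -expnSr prednK // idx_lt ltnW.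
by rewrite val_pair -{2}(prednK dpos); apply: walk1_down.
Qed.

Lemma parent_root : depth a = 0 -> parent a = a.
Proof.
move=> d0; have i0 : idx a = 0 by move: idx_lt; rewrite d0 expn0 ltnS leqn0 => /eqP.
apply: val_inj; rewrite /parent insubdK; first by rewrite val_pair d0 i0.
by rewrite d0 i0 unfold_in.
Qed.

Lemma next_node_adj (R : realType) sL sR sM : ~~ is_leaf a ->
  let b := next_node R a sL sR sM in b = a \/ walkn D 1 (val b) (val a).
Proof.
move=> nleaf; rewrite /next_node; case: ifP => _.
  by right; case: sM; [exact: right_child_adj | exact: left_child_adj].
have [d0 | dpos] := posnP (depth a); first by left; exact: parent_root.
by right; exact: parent_adj.
Qed.

End Neighbours.

Local Open Scope ring_scope.

Theorem lemma3p2 (R : realType) (T : nat) (vstar : R)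
  (HT : (0 < T)%N) (Hv : 0 <= vstar < 1)
  (lstar : node (up_log 2 T))
  (Hleaf : is_leaf lstar) (Hlstar : contains lstar vstar)
  (I : node (up_log 2 T)) (HI : ~~ is_leaf I)
  (sL sR sM : bool) (Hcorr : step_corrupted vstar I sL sR sM) :
  (tree_dist (next_node R I sL sR sM) lstar <= tree_dist I lstar + 1)%N.
Proof.
have [-> | adj] := next_node_adj R sL sR sM HI; first exact: leq_addr.
exact: tree_dist_adj.
Qed.
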